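(* Let $a_1<\dots<a_n$ and $d_1,\dots,d_n$ be real numbers forming a symmetric unit with $a_n=-a_1$, i.e. $a_{n+1-i}=-a_i$ and $d_{n+1-i}=d_i$ for all $i\in\{1,\dots,n\}$. Then for every $H\in\mathbb{R}$, the maximum over $c\in\mathbb{R}$ of $\big|\sum_{i=1}^n d_i\sin(Ha_i+c)\big|$ is attained at $c=\pi/2$ (equivalently at $c=-\pi/2$); that is, one may take $c_{max}(H)=\pm\pi/2$.
   Context: For an array of Josephson junctions with real positions $a_1<\dots<a_n$ and real strengths $d_1,\dots,d_n$, and an applied magnetic field $H\in\mathbb{R}$, the maximal current in the magnetic approximation is $\gamma_{max}(H)=\max_{c\in\mathbb{R}}\big|\sum_{i=1}^n d_i\sin(Ha_i+c)\big|$, and $c_{max}(H)$ denotes a value of $c$ at which this maximum is attained. *)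

From Stdlib Require Import Reals Lra.
Open Scope R_scope.

(* Junctions indexed 0..n-1 (paper's index i corresponds to i-1 here).
   junction_sum n a d H c = sum_{i=0}^{n-1} d_i sin(H a_i + c). *)
Fixpoint junction_sum (n : nat) (a d : nat -> R) (H c : R) : R :=
  match n with
  | O => 0
  | S m => junction_sum m a d H c + d m * sin (H * a m + c)
  end.

(** By [sin (x + c) = cos c sin x + sin c cos x], every junction sum is
    [cos c * S + sin c * C] with [S = sum d_i sin (H a_i)] (the sum at [c = 0])
    and [C = sum d_i cos (H a_i)] (the sum at [c = PI/2]).  Reversing the order
    of summation in [S] and using [a_(n+1-i) = - a_i], [d_(n+1-i) = d_i] turns
    [S] into [- S], so [S = 0] and the sum is [sin c * C], whose modulus is
    largest where [sin c = 1] (and equally large where [sin c = -1]). *)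
From Stdlib Require Import Reals Lra Lia.
Open Scope R_scope.

Section JunctionSum.

Variable H : R.

Lemma junction_sum_ext (n : nat) (a a' d d' : nat -> R) (c : R) :
  (forall i, (i < n)%nat -> a i = a' i) ->
  (forall i, (i < n)%nat -> d i = d' i) ->
  junction_sum n a d H c = junction_sum n a' d' H c.
Proof.
  induction n as [|n IHn]; intros Ea Ed; simpl; [reflexivity|].
  rewrite IHn, Ea, Ed by (intros; auto with arith); reflexivity.
Qed.

Lemma junction_sum_Sl (n : nat) (a d : nat -> R) (c : R) :
  junction_sum (S n) a d H c =
  d 0%nat * sin (H * a 0%nat + c)
  + junction_sum n (fun i => a (S i)) (fun i => d (S i)) H c.
Proof.
  induction n as [|n IHn]; [simpl; ring|].
  change (junction_sum (S (S n)) a d H c)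
    with (junction_sum (S n) a d H c + d (S n) * sin (H * a (S n) + c)).
  rewrite IHn; simpl; ring.
Qed.

Lemma junction_sum_rev (n : nat) (a d : nat -> R) (c : R) :
  junction_sum n a d H c =
  junction_sum n (fun i => a (n - 1 - i)%nat) (fun i => d (n - 1 - i)%nat) H c.
Proof.
  revert a d; induction n as [|n IHn]; intros a d; [reflexivity|].
  rewrite (junction_sum_Sl n (fun i => a (S n - 1 - i)%nat)).
  simpl junction_sum at 1.
  rewrite IHn, Rplus_comm; f_equal.
  - replace (S n - 1 - 0)%nat with n by lia; reflexivity.
  - apply junction_sum_ext; intros i Hi; f_equal; lia.
Qed.

Lemma junction_sum_opp (n : nat) (a d : nat -> R) (c : R) :
  junction_sum n (fun i => - a i) d H (- c) = - junction_sum n a d H c.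
Proof.
  induction n as [|n IHn]; simpl; [ring|].
  rewrite IHn.
  replace (H * - a n + - c) with (- (H * a n + c)) by ring.
  rewrite sin_neg; ring.
Qed.

Lemma junction_sum_phase (n : nat) (a d : nat -> R) (c : R) :
  junction_sum n a d H c =
  cos c * junction_sum n a d H 0 + sin c * junction_sum n a d H (PI / 2).
Proof.
  induction n as [|n IHn]; simpl; [ring|].
  rewrite IHn, !sin_plus, sin_0, cos_0, sin_PI2, cos_PI2; ring.
Qed.

Section SymmetricUnit.

Variables (n : nat) (a d : nat -> R).
Hypothesis Hsyma : forall i : nat, (i < n)%nat -> a (n - 1 - i)%nat = - a i.
Hypothesis Hsymd : forall i : nat, (i < n)%nat -> d (n - 1 - i)%nat = d i.

Lemma symmetric_junction_sum_0 : junction_sum n a d H 0 = 0.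
Proof.
  assert (Eodd : junction_sum n a d H 0 = - junction_sum n a d H 0).
  { rewrite junction_sum_rev at 1; rewrite <- junction_sum_opp, Ropp_0.
    apply junction_sum_ext; intros i Hi; [rewrite Hsyma | rewrite Hsymd];
      auto; ring. }
  lra.
Qed.

Lemma symmetric_junction_sum (c : R) :
  junction_sum n a d H c = sin c * junction_sum n a d H (PI / 2).
Proof. rewrite junction_sum_phase, symmetric_junction_sum_0; ring. Qed.

End SymmetricUnit.

End JunctionSum.

Lemma Rabs_sin_mul_le (c x : R) : Rabs (sin c * x) <= Rabs x.
Proof.
  rewrite Rabs_mult.
  assert (Rabs (sin c) <= 1) by (apply Rabs_le, SIN_bound).
  pose proof (Rabs_pos x); nra.
Qed.

Theorem mainTheorem4 (n : nat) (a d : nat -> R)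
  (Hinc : forall i j : nat, (i < j < n)%nat -> a i < a j)
  (Hsyma : forall i : nat, (i < n)%nat -> a (n - 1 - i)%nat = - a i)
  (Hsymd : forall i : nat, (i < n)%nat -> d (n - 1 - i)%nat = d i)
  (H : R) :
  (forall c : R, Rabs (junction_sum n a d H c) <= Rabs (junction_sum n a d H (PI / 2)))
  /\ Rabs (junction_sum n a d H (- (PI / 2))) = Rabs (junction_sum n a d H (PI / 2)).
Proof.
  split.
  - intro c; rewrite (symmetric_junction_sum H n a d Hsyma Hsymd c).
    apply Rabs_sin_mul_le.
  - rewrite (symmetric_junction_sum H n a d Hsyma Hsymd), sin_neg, sin_PI2.
    rewrite Ropp_mult_distr_l_reverse, Rabs_Ropp, Rmult_1_l; reflexivity.
Qed.
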